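(* Let $F$ be a finite field with $q$ elements, let $C\subseteq F^n$ be a balanced code with information length $d$, and let $B$ be a non-empty subset of $C$. Let $\omega=\frac{\sum_{\mathbf{b}\in B}\mathrm{w}(\mathbf{b})}{n|B|}$ be the average relative weight of $B$. If $0\le\omega\le 1-q^{-1}$, then $|B|\le q^{d\,h_q(\omega)}$.
   Context: $\mathrm{w}$ denotes Hamming weight. For $I=\{1,\dots,n\}$ and a subset $I'=\{i_1<\dots<i_d\}$, the projection $F^I\to F^{I'}$ sends $(a_1,\dots,a_n)$ to $(a_{i_1},\dots,a_{i_d})$. A subset $C\subseteq F^n$ is a balanced code with information length $d$ if there exist subsets $I_1,\dots,I_s$ of $I$ (repetitions allowed), each of cardinality $d$, and an integer $t$ such that (i) every index $i\in I$ lies in exactly $t$ of the sets $I_j$; (ii) for each $j$, the projection $F^I\to F^{I_j}$ maps $C$ bijectively onto $F^{I_j}$. The $q$-ary entropy is $h_q(x)=x\log_q(q-1)-x\log_q x-(1-x)\log_q(1-x)$ with $0\log_q0=0$. *)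

From HB Require Import structures.
From mathcomp Require Import all_boot all_order all_algebra.
From mathcomp Require Import all_classical all_reals all_analysis.
Set Implicit Arguments. Unset Strict Implicit. Unset Printing Implicit Defensive.
Import Order.TTheory GRing.Theory Num.Theory.
Local Open Scope ring_scope.

Definition hweight (F : fieldType) (n : nat) (a : {ffun 'I_n -> F}) : nat :=
  #|[set i : 'I_n | a i != 0]|.

(* The projection F^I -> F^{I'} maps C bijectively onto F^{I'}: every target
   pattern on I' is attained by exactly one codeword (targets in F^{I'} are
   represented by words of F^n, only their restriction to I' matters). *)
Definition proj_bij (F : finFieldType) (n : nat) (C : {set {ffun 'I_n -> F}})
    (I' : {set 'I_n}) : Prop :=
  (forall g : {ffun 'I_n -> F}, exists2 c, c \in C & forall i, i \in I' -> c i = g i)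
  /\ (forall c1 c2, c1 \in C -> c2 \in C ->
        (forall i, i \in I' -> c1 i = c2 i) -> c1 = c2).

Definition balanced_code (F : finFieldType) (n : nat) (C : {set {ffun 'I_n -> F}})
    (d : nat) : Prop :=
  exists (s : nat) (I : 'I_s -> {set 'I_n}) (t : nat),
    [/\ (0 < s)%N,
        forall j, #|I j| = d,
        forall i : 'I_n, #|[set j | i \in I j]| = t
      & forall j, proj_bij C (I j)].

Definition xlogq (R : realType) (q : nat) (x : R) : R :=
  if x == 0 then 0 else x * (ln x / ln (q%:R)).

Definition hq (R : realType) (q : nat) (x : R) : R :=
  x * (ln ((q%:R : R) - 1) / ln (q%:R)) - xlogq q x - xlogq q (1 - x).

(* For every real a, the codewords of C weighted by exp(a * weight on I_j) sum
   to (1 + (q-1) e^a)^d, because C projects bijectively onto F^{I_j}.  Every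
   coordinate lies in t = s d / n of the I_j, so averaging over j and using
   the convexity of exp (over j, then over B within C) gives
   |B| e^{a d omega} <= (1 + (q-1) e^a)^d.  The choice
   e^a = omega / ((q-1)(1-omega)) turns this into |B| <= q^{d h_q(omega)}. *)
From HB Require Import structures.
From mathcomp Require Import all_boot all_order all_algebra.
From mathcomp Require Import all_classical all_reals all_analysis.
From mathcomp Require Import ring.
Set Implicit Arguments. Unset Strict Implicit. Unset Printing Implicit Defensive.
Import Order.TTheory GRing.Theory Num.Theory.

Lemma sum_card_setI_cover (T J : finType) (I : J -> {set T}) (t : nat)
    (A : {set T}) :
  (forall x, #|[set j | x \in I j]| = t) ->
  (\sum_j #|I j :&: A| = t * #|A|)%N.
Proof.
move=> cover_t.
have cardIA j : #|I j :&: A| = (\sum_(x in A) (x \in I j))%N.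
  rewrite -sum1_card big_mkcond [RHS]big_mkcond /=.
  by apply: eq_bigr => x _; rewrite inE; case: (x \in I j); case: (x \in A).
under eq_bigr do rewrite cardIA.
rewrite exchange_big /= (eq_bigr (fun=> t)) => [|x _]; first by rewrite sum_nat_const mulnC.
rewrite -(cover_t x) -sum1_card [RHS]big_mkcond /=.
by apply: eq_bigr => j _; rewrite inE; case: (x \in I j).
Qed.

Local Open Scope ring_scope.

Lemma expR_mean_le (R : realType) (T : finType) (A : {pred T}) (x : T -> R) :
  (0 < #|A|)%N ->
  expR ((\sum_(i in A) x i) / #|A|%:R) <= (\sum_(i in A) expR (x i)) / #|A|%:R.
Proof.
move=> A0; set N := #|A|%:R; set m := _ / N.
have N0 : 0 < N by rewrite ltr0n.
have tangent : \sum_(i in A) (1 + (x i - m)) <= \sum_(i in A) (expR (x i) / expR m).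
  by apply: ler_sum => i _; rewrite -expRB expR_ge1Dx.
have mN : m *+ #|A| = \sum_(i in A) x i by rewrite -mulr_natr -/N /m divfK ?gt_eqF.
rewrite big_split /= sumrB !sumr_const -mulr_suml mN subrr addr0 in tangent.
by rewrite ler_pdivlMr // mulrC -ler_pdivlMr ?expR_gt0.
Qed.

Section Projection.

Variables (F : finFieldType) (n : nat) (C : {set {ffun 'I_n -> F}}) (I : {set 'I_n}).
Hypothesis projC : proj_bij C I.

Definition restr (c : {ffun 'I_n -> F}) : {ffun 'I_n -> F} :=
  [ffun i => if i \in I then c i else 0].

Lemma restr_inj : {in C &, injective restr}.
Proof.
move=> c1 c2 c1C c2C /ffunP eq_restr; apply: projC.2 => // i iI.
by have := eq_restr i; rewrite !ffunE iI.
Qed.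

Lemma mem_imset_restr (f : {ffun 'I_n -> F}) :
  (f \in restr @: C) = (f \in pffun_on 0 I predT).
Proof.
apply/imsetP/pffun_onP => [[c _ ->]|[/supportP f0 _]].
  by split=> //; apply/supportP => i iI; rewrite ffunE (negbTE iI).
have [c cC eq_cf] := projC.1 f; exists c => //.
apply/ffunP => i; rewrite ffunE; case: ifP => iI; first by rewrite eq_cf.
by rewrite f0 // iI.
Qed.

(* Restriction to I maps C bijectively onto the words supported on I, over
   which the sum factors coordinatewise. *)
Lemma proj_bij_sum_pow_weight (R : comRingType) (E : R) :
  \sum_(c in C) E ^+ #|I :&: [set i | c i != 0]| = (1 + (#|F|%:R - 1) * E) ^+ #|I|.
Proof.
pose e (x : F) : R := if x == 0 then 1 else E.
have sum_e : \sum_x e x = 1 + (#|F|%:R - 1) * E.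
  have F0 : (0 < #|F|)%N by apply/card_gt0P; exists 0.
  rewrite (bigD1 0) //= /e eqxx (eq_bigr (fun=> E)) => [|x /negbTE -> //].
  by rewrite sumr_const cardC1 -subn1 -[E *+ _]mulr_natl natrB.
have pow_prod (c : {ffun 'I_n -> F}) :
    E ^+ #|I :&: [set i | c i != 0]| = \prod_(i in I) e (restr c i).
  rewrite -prodr_const big_mkcond [RHS]big_mkcond /=.
  by apply: eq_bigr => i _; rewrite !inE ffunE /e; case: (i \in I); case: (c i == 0).
under eq_bigr do rewrite pow_prod.
rewrite -sum_e -prodr_const (big_distr_big 0 (mem I) predT).
rewrite -(big_imset
  (fun f : {ffun 'I_n -> F} => \prod_(i in I) e (f i)) restr_inj) /=.
by apply: eq_bigl => f; rewrite mem_imset_restr.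
Qed.

End Projection.

Lemma balanced_card_expR_weight (R : realType) (F : finFieldType) (n d : nat)
    (C B : {set {ffun 'I_n -> F}}) (a : R) :
  balanced_code C d -> B \subset C -> (0 < #|B|)%N -> (0 < n)%N ->
  #|B|%:R * expR (a * d%:R * ((\sum_(b in B) hweight b)%:R / (n * #|B|)%:R))
    <= (1 + (#|F|%:R - 1) * expR a) ^+ d.
Proof.
case=> s [I [t [s0 cardI cover_t projC]]] BC B0 n0.
set K := _ ^+ d; set g : R := a * d%:R / n%:R.
have nR : n%:R != 0 :> R by rewrite pnatr_eq0 -lt0n.
have sR : s%:R != 0 :> R by rewrite pnatr_eq0 -lt0n.
have tn_sd : (t * n = s * d)%N.
  have := sum_card_setI_cover [set: 'I_n] cover_t.
  under eq_bigr do rewrite finset.setIT cardI.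
  by rewrite sum_nat_const cardsT !card_ord => ->.
have mean_weight (c : {ffun 'I_n -> F}) : g * (hweight c)%:R
    = (\sum_(j < s) a * #|I j :&: [set i | c i != 0]|%:R) / s%:R.
  rewrite -mulr_sumr -natr_sum (sum_card_setI_cover _ cover_t) /hweight /g natrM.
  have -> : t%:R = s%:R * d%:R / n%:R :> R by rewrite -!natrM -tn_sd natrM mulfK.
  by field; apply/andP.
pose S (c : {ffun 'I_n -> F}) (j : 'I_s) : R :=
  expR (a * #|I j :&: [set i | c i != 0]|%:R).
have sumC : \sum_(c in C) expR (g * (hweight c)%:R) <= K.
  apply: (@le_trans _ _ (\sum_(c in C) (\sum_j S c j) / s%:R)).
    apply: ler_sum => c _; rewrite mean_weight.
    have := expR_mean_le (A := 'I_s) (fun j => a * #|I j :&: [set i | c i != 0]|%:R).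
    by rewrite card_ord; apply.
  rewrite -mulr_suml exchange_big /= (eq_bigr (fun=> K)) => [|j _].
    by rewrite sumr_const card_ord -[K *+ s]mulr_natr mulfK.
  under eq_bigr do rewrite /S expRM_natr.
  by rewrite proj_bij_sum_pow_weight ?cardI.
have sumB : \sum_(b in B) expR (g * (hweight b)%:R) <= K.
  apply: le_trans sumC; rewrite [X in _ <= X](big_setID B) /= (finset.setIidPr BC) lerDl.
  by apply: sumr_ge0 => c _; apply: expR_ge0.
have jensenB := expR_mean_le (fun b => g * (hweight b)%:R) B0.
rewrite -mulr_sumr -natr_sum in jensenB.
have -> : a * d%:R * ((\sum_(b in B) hweight b)%:R / (n * #|B|)%:R)
    = g * (\sum_(b in B) hweight b)%:R / #|B|%:R.
  by rewrite /g natrM; field; rewrite nR pnatr_eq0 -lt0n B0.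
rewrite mulrC -ler_pdivlMr ?ltr0n //; apply: le_trans jensenB _.
by rewrite ler_wpM2r // invr_ge0.
Qed.

Lemma hq0 (R : realType) (q : nat) : hq q (0 : R) = 0.
Proof. by rewrite /hq /xlogq eqxx !subr0 oner_eq0 ln1 !(mul0r, mulr0, subr0). Qed.

Lemma hq_mul_ln (R : realType) (q : nat) (w : R) : (1 < q)%N -> 0 < w < 1 ->
  hq q w * ln q%:R = - ln (1 - w) - w * ln (w / ((q%:R - 1) * (1 - w))).
Proof.
move=> q1 /andP[w0 w1]; have q1R : 0 < q%:R - 1 :> R by rewrite subr_gt0 ltr1n.
have lnq : 0 < ln q%:R :> R by rewrite ln_gt0 // ltr1n.
have w1' : 0 < 1 - w by rewrite subr_gt0.
rewrite ln_div ?posrE ?mulr_gt0 // lnM ?posrE // /hq /xlogq !gt_eqF //.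
by field; rewrite gt_eqF.
Qed.

(* The exponent e^a = w / ((q-1)(1-w)) is the minimiser of
   (1 + (q-1) e^a)^d / e^{a d w}, where it equals q^{d h_q(w)}. *)
Lemma powR_hq (R : realType) (q d : nat) (w : R) : (1 < q)%N -> 0 < w < 1 ->
  let mu := w / ((q%:R - 1) * (1 - w)) in
  q%:R `^ (d%:R * hq q w) = (1 + (q%:R - 1) * mu) ^+ d / expR (ln mu * d%:R * w).
Proof.
move=> q1 w01 mu; have /andP[w0 w1] := w01.
have q1R : 0 < q%:R - 1 :> R by rewrite subr_gt0 ltr1n.
have w1' : 0 < 1 - w by rewrite subr_gt0.
have -> : 1 + (q%:R - 1) * mu = (1 - w)^-1 by rewrite /mu; field; rewrite !gt_eqF.
rewrite -[(1 - w)^-1]lnK ?posrE ?invr_gt0 // lnV ?posrE // -expRM_natl -expRB.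
rewrite /powR gt_eqF ?(lt_trans ltr01) ?ltr1n // -mulrA hq_mul_ln //.
by congr expR; ring.
Qed.

Lemma card_le1_of_sum_hweight_eq0 (F : finFieldType) (n : nat)
    (B : {set {ffun 'I_n -> F}}) :
  (\sum_(b in B) hweight b)%N = 0%N -> (#|B| <= 1)%N.
Proof.
move/eqP; rewrite sum_nat_eq0 => /forall_inP hw0.
rewrite -(cards1 ([ffun=> 0] : {ffun 'I_n -> F})).
apply/subset_leq_card/fintype.subsetP => b bB.
rewrite inE; apply/eqP/ffunP => i; rewrite ffunE.
by have /eqP/cards0_eq/setP/(_ i) := hw0 b bB; rewrite !inE => /negbFE/eqP.
Qed.

Theorem theorem3p3 (R : realType) (F : finFieldType) (n d : nat)
    (C B : {set {ffun 'I_n -> F}}) :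
  balanced_code C d ->
  B \subset C ->
  (0 < #|B|)%N ->
  let q := #|F| in
  let omega : R := (\sum_(b in B) hweight b)%:R / (n * #|B|)%:R in
  0 <= omega <= 1 - (q%:R)^-1 ->
  (#|B|%:R : R) <= (q%:R : R) `^ (d%:R * hq q omega).
Proof.
move=> balC BC B0 q omega /andP[_ omega_le].
have q1 : (1 < q)%N := card_finNzRing_gt1 F.
have [W0|W_neq0] := eqVneq (\sum_(b in B) hweight b)%N 0%N.
  rewrite /omega W0 mul0r hq0 mulr0 powRr0 lern1.
  exact: card_le1_of_sum_hweight_eq0.
have n0 : (0 < n)%N.
  rewrite lt0n; apply: contra W_neq0 => /eqP n0; apply/eqP/big1 => b _.
  by apply/eqP; rewrite -leqn0 -n0 (leq_trans (max_card _)) ?card_ord.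
have omega01 : 0 < omega < 1.
  rewrite divr_gt0 ?ltr0n ?muln_gt0 ?n0 ?B0 ?lt0n //=.
  by apply: le_lt_trans omega_le _; rewrite gtrBl invr_gt0 ltr0n ltnW.
have /= -> := powR_hq d q1 omega01.
rewrite ler_pdivlMr ?expR_gt0 //.
have := balanced_card_expR_weight (ln (omega / ((q%:R - 1) * (1 - omega)))) balC BC B0 n0.
case/andP: omega01 => omega0 omega1.
by rewrite lnK // posrE divr_gt0 // mulr_gt0 // subr_gt0 ?ltr1n.
Qed.
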